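(* In the setting described in the context, for all $c>0$ and all sufficiently large $m$, $$\sum_{i=1}^m\big[1-2\mathsf{Q}(z_i(c))\big]z_i(c)\ \ge\ 0.21\,\frac{q}{m^2}\,\frac{(1+c)^2}{1+c^2}\,\Delta^2.$$
   Context: Two agents $a,b$, $m$ items, utilities $u^a_i,u^b_i\in[0,1]$, additive. For an allocation (partition $(\mathcal{A}_a,\mathcal{A}_b)$ of $[m]$), $\mathrm{Envy}_{a\to b}=\sum_{i\in\mathcal{A}_b}u^a_i-\sum_{i\in\mathcal{A}_a}u^a_i$, $\mathrm{Envy}_{b\to a}=\sum_{i\in\mathcal{A}_a}u^b_i-\sum_{i\in\mathcal{A}_b}u^b_i$, $\mathrm{Envy}=\max$ of the two, and it is assumed that $\min_{\mathcal{A}}\mathrm{Envy}(\mathcal{A})\le-\Delta$, where $\Delta=\Delta(m)$ satisfies $\Delta\ge m^{1/4}\log^2m$ and $\Delta=o(m/\log m)$. The number of queries is $q=m\lceil15\frac{m^{3/2}}{\Delta^2}\log m+\log^2m\rceil$. Define $z_i(c)=\sqrt{\frac{q}{m(1+c^2)}}(cu^a_i-u^b_i)$ and $\mathsf{Q}(z)=\frac1{\sqrt{2\pi}}\int_z^\infty e^{-x^2/2}dx$. $\log$ is natural. *)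

From HB Require Import structures.
From mathcomp Require Import all_boot all_order all_algebra.
From mathcomp Require Import all_classical all_reals all_analysis.
Set Implicit Arguments. Unset Strict Implicit. Unset Printing Implicit Defensive.
Import Order.TTheory GRing.Theory Num.Theory.
Import numFieldNormedType.Exports.
Local Open Scope classical_set_scope.
Local Open Scope ring_scope.

Definition gaussQ (R : realType) (z : R) : R :=
  (Num.sqrt (2 * pi))^-1 *
  Rintegral (@lebesgue_measure R) `[z, +oo[ (fun x : R => expR (- (x ^+ 2) / 2)).

(* Allocation: A is the bundle of agent a, its complement ~: A that of agent b. *)
Definition envy_ab (R : realType) (m : nat) (ua : 'I_m -> R) (A : {set 'I_m}) : R :=
  \sum_(i in ~: A) ua i - \sum_(i in A) ua i.
Definition envy_ba (R : realType) (m : nat) (ub : 'I_m -> R) (A : {set 'I_m}) : R :=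
  \sum_(i in A) ub i - \sum_(i in ~: A) ub i.
Definition envy (R : realType) (m : nat) (ua ub : 'I_m -> R) (A : {set 'I_m}) : R :=
  Num.max (envy_ab ua A) (envy_ba ub A).

Definition nqueries (R : realType) (m : nat) (D : R) : R :=
  m%:R * (Num.ceil (15 * (m%:R `^ (3 / 2)) / D ^+ 2 * ln (m%:R : R)
                   + (ln (m%:R : R)) ^+ 2))%:~R.

Definition zval (R : realType) (m : nat) (q : R) (ua ub : 'I_m -> R) (c : R) (i : 'I_m) : R :=
  Num.sqrt (q / (m%:R * (1 + c ^+ 2))) * (c * ua i - ub i).

From HB Require Import structures.
From mathcomp Require Import all_boot all_order all_algebra.
From mathcomp Require Import all_classical all_reals all_analysis.
From mathcomp Require Import ring lra normal_distribution.

(* Write p for the standard normal density.  For z >= 0 we have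
   1 - 2 Q(z) = 2 int_0^z p, and symmetrically for z <= 0; since p >= 1/6 on
   [-1, 1], every term satisfies (1 - 2 Q(z)) z >= |z| min(|z|, 1) / 3.  For
   x <= 1/2 the function t |-> t min(t, 1) lies above its tangent
   2 x t - x^2, so sum_i (1 - 2 Q(z_i)) z_i >= m x^2 / 3 whenever
   sum_i |z_i| >= m x.  An allocation with envy at most -Delta gives
   sum_i |c u^a_i - u^b_i| >= (1 + c) Delta, so we may take
   x = sqrt(q / (m (1 + c^2))) (1 + c) Delta / m, with
   x^2 = (q Delta^2 / m^3) (1 + c)^2 / (1 + c^2).  As Delta = o(m / log m),
   q Delta^2 / m^3 <= 1/8 for large m, hence x <= 1/2; finally
   m x^2 = (q / m^2) Delta^2 (1 + c)^2 / (1 + c^2) and 1/3 > 0.21. *)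

Set Implicit Arguments.
Unset Strict Implicit.
Unset Printing Implicit Defensive.
Import Order.TTheory GRing.Theory Num.Theory.
Import numFieldNormedType.Exports.
Local Open Scope classical_set_scope.
Local Open Scope ring_scope.

Section Rintegral_subset.
Context {d} {T : measurableType d} {R : realType} (mu : {measure set T -> \bar R}).

Lemma le_Rintegral_subset (A B : set T) (f : T -> R) :
  measurable A -> measurable B -> A `<=` B ->
  mu.-integrable B (EFin \o f) -> (forall x, B x -> 0 <= f x) ->
  \int[mu]_(x in A) f x <= \int[mu]_(x in B) f x.
Proof.
move=> mA mB AB intf f0; apply: fine_le.
- exact: integrable_fin_num (integrableS mB mA AB intf).
- exact: integrable_fin_num intf.
by apply: ge0_subset_integral => //; case/integrableP: intf.
Qed.

End Rintegral_subset.

Section standard_normal.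
Context {R : realType}.
Local Notation mu := (@lebesgue_measure R).
Local Notation p := (normal_pdf (0 : R) 1).

Lemma integrable_normal_pdf01 (A : set R) : measurable A -> mu.-integrable A (EFin \o p).
Proof. by move=> mA; apply: integrableS (integrable_normal_pdf 0 1). Qed.

Lemma sqrt2pi_gt0 : 0 < Num.sqrt (2 * pi) :> R.
Proof. by rewrite sqrtr_gt0 mulr_gt0 ?pi_gt0. Qed.

Lemma normal_pdf01E x : p x = (Num.sqrt (2 * pi))^-1 * expR (- (x ^+ 2) / 2).
Proof.
rewrite normal_pdfE ?oner_neq0 // /normal_peak /normal_fun subr0 expr1n mul1r.
by rewrite mulr_natl.
Qed.

Lemma gaussQE z : gaussQ z = \int[mu]_(x in `[z, +oo[) p x.
Proof.
have s0 := sqrt2pi_gt0.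
rewrite /gaussQ -RintegralZl //.
  by apply: eq_Rintegral => x _; rewrite normal_pdf01E.
apply: (eq_integrable _ _ _ _ (integrableZl _ (Num.sqrt (2 * pi)) (integrable_normal_pdf01 _))) => //.
move=> x _.
by rewrite /= normal_pdf01E -EFinM mulrA divff ?gt_eqF // mul1r.
Qed.

Lemma normal_pdf01N x : p (- x) = p x.
Proof. by rewrite !normal_pdf01E sqrrN. Qed.

Lemma Rintegral0y_normal_pdf01 : \int[mu]_(x in `[0, +oo[) p x = 1 / 2.
Proof.
have := integral_normal_pdf (0 : R) 1.
rewrite ge0_symfun_integralT; last 3 first.
- exact: normal_pdf_ge0.
- exact/continuous_normal_pdf/oner_neq0.
- by move=> x /=; rewrite normal_pdf01N.
rewrite (_ : [set x | 0 <= x] = `[0%R, +oo[%classic); last first.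
  by apply/seteqP; split => x /=; rewrite in_itv /= andbT.
rewrite /Rintegral; case: (\int[mu]_(x in `[0%R, +oo[) (p x)%:E)%E => [r||] //.
- by rewrite -EFinM => -[] /=; lra.
- by rewrite gt0_muley ?lte_fin.
- by rewrite gt0_muleNy ?lte_fin.
Qed.

Lemma one_sub_twice_gaussQ_ge0 z : 0 <= z -> 1 - 2 * gaussQ z = 2 * \int[mu]_(x in `[0, z]) p x.
Proof.
move=> z0; have := @Rintegral_itvB R p (BLeft 0) (BInfty _ false) z.
rewrite Rintegral_itv_obnd_cbnd ?integrable_normal_pdf01 // Rintegral0y_normal_pdf01 -gaussQE.
rewrite !bnd_simp => /(_ isT z0 isT); lra.
Qed.

Lemma one_sub_twice_gaussQ_le0 z : z <= 0 -> 1 - 2 * gaussQ z = - (2 * \int[mu]_(x in `[z, 0]) p x).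
Proof.
move=> z0; have := @Rintegral_itvB R p (BLeft z) (BInfty _ false) 0.
rewrite Rintegral_itv_obnd_cbnd ?integrable_normal_pdf01 // Rintegral0y_normal_pdf01 -gaussQE.
rewrite !bnd_simp => /(_ isT z0 isT); lra.
Qed.

Lemma normal_pdf01_ge x : -1 <= x <= 1 -> 1 / 6 <= p x.
Proof.
move=> /andP[xge xle]; rewrite normal_pdf01E.
have sqrt2pi_le3 : Num.sqrt (2 * pi) <= 3 :> R.
  have := pihalf_lt2 R; have := sqr_sqrtr (mulr_ge0 (ler0n R 2) (pi_ge0 R)).
  have := sqrt2pi_gt0; nra.
have inv_ge : 1 / 3 <= (Num.sqrt (2 * pi))^-1 :> R.
  by rewrite div1r lef_pV2 ?posrE ?sqrt2pi_gt0.
have exp_ge : 1 / 2 <= expR (- (x ^+ 2) / 2).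
  apply: le_trans (expR_ge1Dx _); nra.
have := expR_ge0 (- (x ^+ 2) / 2); nra.
Qed.

Lemma Rintegral_normal_pdf01_ge a b a' b' : a <= a' -> a' <= b' -> b' <= b ->
  -1 <= a' -> b' <= 1 -> (b' - a') / 6 <= \int[mu]_(x in `[a, b]) p x.
Proof.
move=> aa' a'b' b'b a'ge b'le.
apply: le_trans (le_Rintegral_subset (mu := mu) (A := `[a', b']) _ _ _ _ _); last 5 first.
- exact: measurable_itv.
- exact: measurable_itv.
- by apply: subset_itv; rewrite bnd_simp.
- exact: integrable_normal_pdf01.
- by move=> x _; exact: normal_pdf_ge0.
have -> : (b' - a') / 6 = \int[mu]_(x in `[a', b']) (1 / 6 : R).
  rewrite Rintegral_cst //; have := @lebesgue_measure_itv R `[a', b'] => /= ->.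
  by rewrite lte_fin; case: ltP => /= [|?]; lra.
apply: le_Rintegral => //.
- apply/integrableP; split; first exact: measurable_cst.
  rewrite integral_cst //=; have := @lebesgue_measure_itv R `[a', b'] => /= ->.
  by case: ifP => _; rewrite ?mule0 // -EFinM ltry.
- exact: integrable_normal_pdf01.
move=> x /=; rewrite in_itv /= => /andP[xa xb].
apply: normal_pdf01_ge; apply/andP; split; lra.
Qed.

Lemma mul_one_sub_twice_gaussQ_ge (z : R) :
  `|z| * Num.min `|z| 1 / 3 <= (1 - 2 * gaussQ z) * z.
Proof.
have [z0|z0] := leP 0 z.
- rewrite one_sub_twice_gaussQ_ge0 // ger0_norm //.
  have I_ge : Num.min z 1 / 6 <= \int[mu]_(x in `[0, z]) p x.
    rewrite -[X in X / 6]subr0; apply: Rintegral_normal_pdf01_ge => //.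
    + by rewrite le_min z0 ler01.
    + by rewrite ge_min lexx.
    + by rewrite ge_min lexx orbT.
  by have := ler_wpM2l z0 I_ge; lra.
- rewrite one_sub_twice_gaussQ_le0 ?(ltW z0) // ltr0_norm //.
  have I_ge : Num.min (- z) 1 / 6 <= \int[mu]_(x in `[z, 0]) p x.
    rewrite -[X in X / 6]opprK -[X in X / 6]sub0r.
    apply: Rintegral_normal_pdf01_ge => //.
    + by rewrite lerNr ge_min lexx.
    + by rewrite oppr_le0 le_min oppr_ge0 (ltW z0) ler01.
    + by rewrite lerN2 ge_min lexx orbT.
  have nz0 : 0 <= - z by lra.
  by have := ler_wpM2l nz0 I_ge; lra.
Qed.

End standard_normal.

Section query_count.
Context {R : realType}.

Lemma powR_quarterK (M : R) : 0 <= M -> (M `^ (1 / 4)) ^+ 4 = M.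
Proof.
move=> M0; rewrite -powR_mulrn ?powR_ge0 // -powRrM.
have -> : 1 / 4 * 4%:R = 1 :> R by lra.
by rewrite powRr1.
Qed.

Lemma ge_powR_quarter (M x : R) : 0 <= x -> x ^+ 4 <= M -> x <= M `^ (1 / 4).
Proof.
move=> x0 xM; have M0 : 0 <= M := le_trans (exprn_ge0 4 x0) xM.
by rewrite -(@ler_pXn2r _ 4) ?nnegrE ?powR_ge0 // powR_quarterK.
Qed.

Lemma ln_ge1_sub_inv (x : R) : 0 < x -> 1 - x^-1 <= ln x.
Proof.
move=> x0; have := @le_ln1Dx R (x^-1 - 1).
rewrite addrCA subrr addr0 lnV ?posrE // ltrBrDr addrC subrr invr_gt0.
by move=> /(_ x0); lra.
Qed.

(* With r = M^(1/4): 15 M^(3/2) ln M = 60 r^6 ln r < 60 r^7 <= r^8 / 16 once r >= 960. *)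
Lemma powR32_ln_le (M : R) : 0 <= M -> 960 <= M `^ (1 / 4) ->
  15 * M `^ (3 / 2) * ln M <= M ^+ 2 / 16.
Proof.
move=> M0; have r4 := powR_quarterK M0.
have -> : M `^ (3 / 2) = (M `^ (1 / 4)) ^+ 6.
  by rewrite -powR_mulrn ?powR_ge0 // -powRrM; congr (M `^ _); lra.
move: r4; set r := M `^ (1 / 4) => <- r_ge.
have r0 : 0 < r by lra.
rewrite lnXn //.
have lnr_lt := ln_sublinear r0.
have r6 := exprn_ge0 6 (ltW r0).
have r7 := exprn_ge0 7 (ltW r0).
have : 15 * r ^+ 6 * (ln r *+ 4) <= 60 * r ^+ 7.
  by rewrite (exprS r 6); have := ler_wpM2l r6 (ltW lnr_lt); lra.
have : 60 * r ^+ 7 <= r ^+ 8 / 16.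
  by rewrite (exprS r 7); have := ler_wpM2l r7 r_ge; lra.
by rewrite -exprM; lra.
Qed.

Lemma nqueries_le (m : nat) (D : R) : 960 <= (m%:R : R) `^ (1 / 4) -> 0 < D ->
  D * ln (m%:R : R) <= m%:R / 8 ->
  0 <= nqueries m D /\ nqueries m D * D ^+ 2 / m%:R ^+ 3 <= 1 / 8.
Proof.
rewrite /nqueries; set M : R := m%:R; set L := ln M => r_ge D0 DL_le.
have M0 : 0 <= M := ler0n R m.
have M_gt0 : 0 < M.
  rewrite lt0r M0 andbT; apply: contraTneq r_ge => ->.
  by rewrite powR0 -?ltNge ?ltr0n // div1r invr_neq0.
have L1 : 1 <= L.
  have r_gt0 : 0 < M `^ (1 / 4) := powR_gt0 _ M_gt0.
  rewrite /L -(powR_quarterK M0) lnXn // ; have := ln_ge1_sub_inv r_gt0.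
  have : (M `^ (1 / 4))^-1 <= 960^-1 by rewrite lef_pV2 ?posrE ?ltr0n.
  lra.
set E := 15 * M `^ (3 / 2) / D ^+ 2 * L + L ^+ 2.
have E_lt : (Num.ceil E)%:~R < E + 1 :> R.
  by have := ceilB1_lt E; rewrite rmorphB /=; lra.
have E0 : 0 <= E.
  by rewrite addr_ge0 ?sqr_ge0 // mulr_ge0 ?divr_ge0 ?sqr_ge0 ?mulr_ge0 ?powR_ge0 //; lra.
split; first by rewrite mulr_ge0 // (le_trans E0 (ceil_ge E)).
have D2 : 0 < D ^+ 2 by rewrite exprn_gt0.
have ED : (E + 1) * D ^+ 2 = 15 * M `^ (3 / 2) * L + (L ^+ 2 + 1) * D ^+ 2.
  by rewrite /E; field; rewrite gt_eqF.
have first_le := powR32_ln_le M0 r_ge; rewrite -/L in first_le.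
have second_le : (L ^+ 2 + 1) * D ^+ 2 <= M ^+ 2 / 32.
  have DL0 : 0 <= D * L by rewrite mulr_ge0 //; lra.
  have : (D * L) ^+ 2 <= (M / 8) ^+ 2 by rewrite ler_pXn2r ?nnegrE //; lra.
  rewrite exprMn; have := ler_wpM2l (ltW D2) (_ : 1 <= L ^+ 2); nra.
rewrite ler_pdivrMr ?exprn_gt0 //.
have : M * (Num.ceil E)%:~R * D ^+ 2 <= M * ((E + 1) * D ^+ 2).
  by rewrite -mulrA ler_pM2l // ler_pM2r // ltW.
rewrite ED => ceil_le; have := ler_wpM2l M0 (lerD first_le second_le).
have := mulr_ge0 M0 (sqr_ge0 M); rewrite (exprS M 2); lra.
Qed.

End query_count.

Section allocation.
Context {R : realType} {m : nat}.
Implicit Types (ua ub : 'I_m -> R) (A : {set 'I_m}).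

Lemma envy_le_sum_norm ua ub A (c D : R) : 0 <= c -> envy ua ub A <= - D ->
  (1 + c) * D <= \sum_(i < m) `|c * ua i - ub i|.
Proof.
rewrite /envy /envy_ab /envy_ba ge_max => c0 /andP[ab_le ba_le].
have -> : \sum_(i < m) `|c * ua i - ub i| =
    \sum_(i in A) `|c * ua i - ub i| + \sum_(i in ~: A) `|c * ua i - ub i|.
  by rewrite (bigID (mem A)) /=; congr (_ + _); apply: eq_bigl => i; rewrite inE.
have in_A : c * \sum_(i in A) ua i - \sum_(i in A) ub i <= \sum_(i in A) `|c * ua i - ub i|.
  by rewrite mulr_sumr -sumrB; apply: ler_sum => i _; exact: ler_norm.
have out_A : \sum_(i in ~: A) ub i - c * \sum_(i in ~: A) ua i <=
             \sum_(i in ~: A) `|c * ua i - ub i|.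
  by rewrite mulr_sumr -sumrB; apply: ler_sum => i _; rewrite distrC ler_norm.
by have := ler_wpM2l c0 ab_le; lra.
Qed.

Lemma sum_norm_zval q ua ub (c : R) :
  \sum_(i < m) `|zval q ua ub c i| =
  Num.sqrt (q / (m%:R * (1 + c ^+ 2))) * \sum_(i < m) `|c * ua i - ub i|.
Proof.
by rewrite mulr_sumr; apply: eq_bigr => i _; rewrite normrM ger0_norm ?sqrtr_ge0.
Qed.

End allocation.

Lemma tangent_le_mul_min (R : realType) (t x : R) : 0 <= t -> 0 <= x <= 1 / 2 ->
  2 * x * t - x ^+ 2 <= t * Num.min t 1.
Proof.
move=> t0 /andP[x0 x_le]; have [t1|t1] := leP t 1.
- by have := sqr_ge0 (t - x); nra.
- nra.
Qed.

Lemma sum_gaussQ_terms_ge (R : realType) (m : nat) (z : 'I_m -> R) (x : R) :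
  0 <= x <= 1 / 2 -> m%:R * x <= \sum_(i < m) `|z i| ->
  m%:R * x ^+ 2 / 3 <= \sum_(i < m) (1 - 2 * gaussQ (z i)) * z i.
Proof.
move=> x_bd sum_ge.
have term_ge i : (2 * x * `|z i| - x ^+ 2) / 3 <= (1 - 2 * gaussQ (z i)) * z i.
  apply: le_trans (mul_one_sub_twice_gaussQ_ge (z i)).
  by have := tangent_le_mul_min (normr_ge0 (z i)) x_bd; lra.
apply: le_trans (ler_sum _ (fun i _ => term_ge i)).
rewrite -mulr_suml sumrB -mulr_sumr sumr_const card_ord -mulr_natl.
have /andP[x0 _] := x_bd; have x2_ge0 : 0 <= 2 * x by lra.
by have := ler_wpM2l x2_ge0 sum_ge; lra.
Qed.

Lemma nqueries_small_eventually (R : realType) (Delta : nat -> R) :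
  (forall m : nat, (m%:R : R) `^ (1 / 4) * (ln (m%:R : R)) ^+ 2 <= Delta m) ->
  (fun m : nat => Delta m / ((m%:R : R) / ln (m%:R : R))) @ \oo --> (0 : R) ->
  \forall m \near \oo, [/\ (0 < m)%N, 0 < Delta m, 0 <= nqueries m (Delta m) &
                          nqueries m (Delta m) * Delta m ^+ 2 / m%:R ^+ 3 <= 1 / 8].
Proof.
move=> Delta_ge Delta_o.
near=> m.
have m_ge : (960 ^+ 4 : R) <= m%:R by near: m; exact: nbhs_infty_ger.
have r_ge : 960 <= (m%:R : R) `^ (1 / 4) := ge_powR_quarter (ler0n R 960) m_ge.
have r_gt0 : 0 < (m%:R : R) `^ (1 / 4) := lt_le_trans (ltr0n R 960) r_ge.
have M_gt0 : 0 < (m%:R : R) := lt_le_trans (exprn_gt0 4 (ltr0n R 960)) m_ge.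
have L_gt0 : 0 < ln (m%:R : R).
  by apply: ln_gt0; apply: lt_le_trans m_ge; rewrite exprn_egt1 ?ltr1n.
have D_gt0 : 0 < Delta m.
  by apply: lt_le_trans (Delta_ge m); rewrite mulr_gt0 ?exprn_gt0.
have DL_le : Delta m * ln m%:R <= m%:R / 8.
  have : `|Delta m / (m%:R / ln m%:R)| < 1 / 8.
    by near: m; apply: (cvgr0_norm_lt _ Delta_o); lra.
  rewrite invf_div mulrA ger0_norm; last by rewrite divr_ge0 ?mulr_ge0 // ltW.
  by rewrite ltr_pdivrMr //; lra.
have [q0 qD_le] := nqueries_le r_ge D_gt0 DL_le.
by split => //; rewrite -(ltr0n R).
Unshelve. all: by end_near.
Qed.

Lemma sum_gaussQ_zval_ge (R : realType) (m : nat) (q D c : R) (ua ub : 'I_m -> R)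
    (A : {set 'I_m}) :
  (0 < m)%N -> 0 <= q -> 0 <= D -> q * D ^+ 2 / m%:R ^+ 3 <= 1 / 8 ->
  envy ua ub A <= - D -> 0 < c ->
  q / m%:R ^+ 2 * ((1 + c) ^+ 2 / (1 + c ^+ 2)) * D ^+ 2 / 3 <=
  \sum_(i < m) (1 - 2 * gaussQ (zval q ua ub c i)) * zval q ua ub c i.
Proof.
move=> m_gt0 q0 D0 qD_le envy_le c0.
set M : R := m%:R; have M_gt0 : 0 < M by rewrite ltr0n.
have c2_gt0 : 0 < 1 + c ^+ 2 by rewrite ltr_pwDl ?sqr_ge0.
set K := (1 + c) ^+ 2 / (1 + c ^+ 2).
have K_le : K <= 2 by rewrite ler_pdivrMr //; have := sqr_ge0 (c - 1); nra.
have K_ge : 0 <= K by rewrite divr_ge0 ?sqr_ge0 // ltW.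
set s := Num.sqrt (q / (M * (1 + c ^+ 2))).
have s2 : s ^+ 2 = q / (M * (1 + c ^+ 2)).
  by rewrite sqr_sqrtr // divr_ge0 // mulr_ge0 // ltW.
set x := s * (1 + c) * D / M.
have x0 : 0 <= x by rewrite divr_ge0 ?mulr_ge0 ?sqrtr_ge0 ?addr_ge0 // ltW.
have x2 : x ^+ 2 = q * D ^+ 2 / M ^+ 3 * K.
  by rewrite /x /K !exprMn exprVn s2; field; rewrite !gt_eqF.
have x_le : x <= 1 / 2.
  have : 0 <= q * D ^+ 2 / M ^+ 3 by rewrite divr_ge0 ?mulr_ge0 ?sqr_ge0 // exprn_ge0 // ltW.
  have : x ^+ 2 <= 1 / 4 by rewrite x2; nra.
  nra.
have sum_ge : M * x <= \sum_(i < m) `|zval q ua ub c i|.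
  rewrite sum_norm_zval (_ : M * x = s * ((1 + c) * D)); last by rewrite /x; field; rewrite gt_eqF.
  by rewrite ler_wpM2l ?sqrtr_ge0 // (envy_le_sum_norm (ltW c0) envy_le).
have -> : q / M ^+ 2 * K * D ^+ 2 / 3 = M * x ^+ 2 / 3.
  by rewrite x2; field; rewrite gt_eqF.
by apply: sum_gaussQ_terms_ge sum_ge; rewrite x0 x_le.
Qed.

Theorem lemma12 (R : realType) (Delta : nat -> R)
  (hDlow : forall m : nat, (m%:R : R) `^ (1 / 4) * (ln (m%:R : R)) ^+ 2 <= Delta m)
  (hDo : (fun m : nat => Delta m / ((m%:R : R) / ln (m%:R : R))) @ \oo --> (0 : R)) :
  exists M0 : nat, forall m : nat, (M0 <= m)%N ->
  forall ua ub : 'I_m -> R,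
    (forall i, 0 <= ua i <= 1) -> (forall i, 0 <= ub i <= 1) ->
    (exists A : {set 'I_m}, envy ua ub A <= - Delta m) ->
  forall c : R, 0 < c ->
    let q := nqueries m (Delta m) in
    \sum_(i < m) (1 - 2 * gaussQ (zval q ua ub c i)) * zval q ua ub c i
      >= 21 / 100 * (q / (m%:R ^+ 2)) * ((1 + c) ^+ 2 / (1 + c ^+ 2)) * Delta m ^+ 2.
Proof.
have [M0 _ eventually_small] := nqueries_small_eventually hDlow hDo.
exists M0 => m /eventually_small[m_gt0 D_gt0 q0 qD_le] ua ub _ _ [A envy_le] c c0 /=.
apply: le_trans (sum_gaussQ_zval_ge m_gt0 q0 (ltW D_gt0) qD_le envy_le c0).
have K_ge0 := divr_ge0 (sqr_ge0 (1 + c)) (addr_ge0 ler01 (sqr_ge0 c)).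
have := mulr_ge0 (mulr_ge0 (divr_ge0 q0 (sqr_ge0 m%:R)) K_ge0) (sqr_ge0 (Delta m)).
lra.
Qed.
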